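(* Let $n\ge 1$ be an integer and let $x$ be an integer with $0\le x\le n-1$ such that there exists a positive divisor $h$ of $x$ with $(2x+1)\mid(2n-2h+1)$. Then $F_{n,n-x}=1$.
   Context: Define maps $G,S:\mathbb Z^2\to\mathbb Z^2$ by $G(x,y)=(x+y,y)$ and $S(x,y)=(3x-2y+1,\,2x-y+1)$. Define the array $(F_{n,k})_{n,k\ge 0}$ by $F_{0,0}=1$ and, for $(n,k)\neq(0,0)$, $F_{n,k}$ is the number of finite words $w=w_1w_2\cdots w_m$ ($m\ge 0$) over the alphabet $\{G,S\}$ with $w_1\circ w_2\circ\cdots\circ w_m(1,1)=(n,k)$ (the empty word acts as the identity). Equivalently: start with all entries $0$, set $F_{0,0}=1$ and $F_{1,1}=1$, and thereafter, whenever an entry $F_{n,k}$ with $n\ge 1$ changes its value, increase $F_{n+k,k}$ and $F_{3n+1-2k,\,2n+1-k}$ by $1$. Every positive integer divides $0$. *)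

From Stdlib Require Import ZArith List.
Import ListNotations.
Open Scope Z_scope.

Inductive letter : Type := LG | LS.

Definition apply_letter (l : letter) (p : Z * Z) : Z * Z :=
  let (x, y) := p in
  match l with
  | LG => (x + y, y)
  | LS => (3 * x - 2 * y + 1, 2 * x - y + 1)
  end.

Fixpoint act (w : list letter) (p : Z * Z) : Z * Z :=
  match w with
  | [] => p
  | l :: w' => apply_letter l (act w' p)
  end.

(* [F_is n k m] : "F_{n,k} = m", i.e. F_{0,0} = 1, and for (n,k) <> (0,0)
   the number of words w over {G,S} with w(1,1) = (n,k) is exactly m
   (there is a duplicate-free list of length m enumerating exactly these words). *)
Definition F_is (n k : Z) (m : nat) : Prop :=
  if (Z.eqb n 0 && Z.eqb k 0)%bool then m = 1%nat
  else exists ws : list (list letter),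
    NoDup ws /\ length ws = m /\
    (forall w, In w ws <-> act w (1, 1) = (n, k)).

(** Every point (p, q) reached from (1,1) satisfies 1 <= q <= p.  On that cone G and S
    are injective and have disjoint images avoiding (1,1) (G-images have p - q >= q,
    S-images p - q < q), so w |-> w(1,1) is injective and F = 1 at every reachable point.
    Since 2n - 2h + 1 = 2(n - x - h) + (2x + 1), the hypothesis gives x = j h and
    n - x - h = k (2x + 1) with j, k >= 0 (for x = 0 take h = 1), and the word
    S^k G^j S^(h-1) reaches (n, n - x): S^(h-1) takes (1,1) to (h,h), G^j takes it to
    (x + h, h), and each S keeps p - q = x while adding 2x + 1 to both coordinates. *)

From Stdlib Require Import ZArith List Lia.
Import ListNotations.
Open Scope Z_scope.

Definition reachable (p : Z * Z) : Prop := exists w, act w (1, 1) = p.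

Lemma act_app (u v : list letter) (p : Z * Z) : act (u ++ v) p = act u (act v p).
Proof. induction u as [|l u IH]; simpl; congruence. Qed.

Lemma reachable_base : reachable (1, 1).
Proof. now exists []. Qed.

Lemma reachable_act (u : list letter) (p : Z * Z) : reachable p -> reachable (act u p).
Proof. intros [w Hw]. exists (u ++ w). now rewrite act_app, Hw. Qed.

Lemma act_repeat_G (j : nat) (x y : Z) :
  act (repeat LG j) (x, y) = (x + Z.of_nat j * y, y).
Proof.
  induction j as [|j IH]; cbn [act repeat].
  - f_equal; lia.
  - rewrite IH, Nat2Z.inj_succ. cbn [apply_letter]. f_equal; ring.
Qed.

Lemma act_repeat_S (k : nat) (x y : Z) :
  act (repeat LS k) (x, y) =
  (x + Z.of_nat k * (2 * (x - y) + 1), y + Z.of_nat k * (2 * (x - y) + 1)).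
Proof.
  induction k as [|k IH]; cbn [act repeat].
  - f_equal; lia.
  - rewrite IH, Nat2Z.inj_succ. cbn [apply_letter]. f_equal; ring.
Qed.

Lemma reachable_divisor_point (x h k : Z) :
  0 < h -> (h | x) -> 0 <= x -> 0 <= k ->
  reachable (x + h + k * (2 * x + 1), h + k * (2 * x + 1)).
Proof.
  intros Hh [j Hj] Hx Hk.
  assert (Hj0 : 0 <= j) by nia.
  assert (Rhh : reachable (h, h)).
  { replace (h, h) with (act (repeat LS (Z.to_nat (h - 1))) (1, 1))
      by (rewrite act_repeat_S, Z2Nat.id by lia; f_equal; lia).
    apply reachable_act, reachable_base. }
  assert (Rxh : reachable (x + h, h)).
  { replace (x + h, h) with (act (repeat LG (Z.to_nat j)) (h, h))
      by (rewrite act_repeat_G, Z2Nat.id by lia; f_equal; lia).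
    now apply reachable_act. }
  replace (x + h + k * (2 * x + 1), h + k * (2 * x + 1))
    with (act (repeat LS (Z.to_nat k)) (x + h, h))
    by (rewrite act_repeat_S, Z2Nat.id by lia; f_equal; ring).
  now apply reachable_act.
Qed.

Lemma apply_letter_cone (l : letter) (x y : Z) :
  1 <= y <= x -> 1 <= snd (apply_letter l (x, y)) <= fst (apply_letter l (x, y)).
Proof. destruct l; cbn [apply_letter fst snd]; lia. Qed.

Lemma act_cone (w : list letter) : 1 <= snd (act w (1, 1)) <= fst (act w (1, 1)).
Proof.
  induction w as [|l w IH]; cbn [act]; [cbn [fst snd]; lia|].
  destruct (act w (1, 1)) as [x y]. now apply apply_letter_cone.
Qed.

Lemma apply_letter_neq_base (l : letter) (x y : Z) :
  1 <= y <= x -> apply_letter l (x, y) <> (1, 1).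
Proof. destruct l; cbn [apply_letter]; rewrite pair_equal_spec; lia. Qed.

Lemma apply_letter_inj_cone (l l' : letter) (x y x' y' : Z) :
  1 <= y <= x -> 1 <= y' <= x' ->
  apply_letter l (x, y) = apply_letter l' (x', y') -> l = l' /\ (x, y) = (x', y').
Proof.
  intros H H' E.
  destruct l, l'; cbn [apply_letter] in E; rewrite pair_equal_spec in E;
    (split; [reflexivity | f_equal; lia]) || lia.
Qed.

Lemma act_base_inj (w w' : list letter) : act w (1, 1) = act w' (1, 1) -> w = w'.
Proof.
  revert w'; induction w as [|l w IH]; intros [|l' w'] E; cbn [act] in E;
    [reflexivity | | | ].
  - pose proof (act_cone w') as C. destruct (act w' (1, 1)) as [x y].
    destruct (apply_letter_neq_base l' x y C). now symmetry.
  - pose proof (act_cone w) as C. destruct (act w (1, 1)) as [x y].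
    destruct (apply_letter_neq_base l x y C). exact E.
  - pose proof (act_cone w) as C. pose proof (act_cone w') as C'.
    destruct (act w (1, 1)) as [x y] eqn:Ew, (act w' (1, 1)) as [x' y'] eqn:Ew'.
    destruct (apply_letter_inj_cone l l' x y x' y' C C' E) as [-> Exy].
    f_equal. apply IH. congruence.
Qed.

Lemma reachable_F_is_one (n k : Z) : reachable (n, k) -> F_is n k 1.
Proof.
  intros [w Hw].
  pose proof (act_cone w) as C. rewrite Hw in C. cbn [fst snd] in C.
  unfold F_is. replace (n =? 0) with false by (symmetry; apply Z.eqb_neq; lia).
  exists [w]. split; [repeat constructor; intros []|split; [reflexivity|]].
  intros w'; split.
  - now intros [<-|[]].
  - intros Hw'. left. apply act_base_inj. congruence.
Qed.

Lemma divisor_condition_quotient (n x h : Z) :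
  0 < h <= x -> x < n -> (2 * x + 1 | 2 * n - 2 * h + 1) ->
  exists k, 0 <= k /\ n - x - h = k * (2 * x + 1).
Proof.
  intros Hh Hn [c Hc].
  destruct (Z.Even_or_Odd c) as [[q ->]|[q ->]]; [lia|].
  exists q. split; nia.
Qed.

Theorem theorem9 (n x : Z) :
  1 <= n ->
  0 <= x <= n - 1 ->
  (exists h : Z, 0 < h /\ (h | x) /\ (2 * x + 1 | 2 * n - 2 * h + 1)) ->
  F_is n (n - x) 1%nat.
Proof.
  intros Hn Hx [h [Hh [Hhx Hdiv]]].
  apply reachable_F_is_one.
  destruct (Z.eq_dec x 0) as [->|Hx0].
  - replace (n, n - 0) with (0 + 1 + (n - 1) * (2 * 0 + 1), 1 + (n - 1) * (2 * 0 + 1))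
      by (f_equal; lia).
    apply reachable_divisor_point; [lia | apply Z.divide_0_r | lia | lia].
  - assert (h <= x) by (apply Z.divide_pos_le; [lia | exact Hhx]).
    destruct (divisor_condition_quotient n x h) as [k [Hk Ek]]; [lia | lia | exact Hdiv |].
    replace (n, n - x) with (x + h + k * (2 * x + 1), h + k * (2 * x + 1)) by (f_equal; lia).
    apply reachable_divisor_point; [exact Hh | exact Hhx | lia | exact Hk].
Qed.
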